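(* Every scattered compact Hausdorff space $K$ of height $2$ has the regular extension property.
   Context: Height $2$ means that the second Cantor--Bendixson derivative $K^{(2)}$ is empty (where $K'$ is the set of non-isolated points of $K$ and $K^{(2)}=(K')'$). $C(K)$ is the Banach space of real-valued continuous functions on $K$ with the supremum norm and $\mathbf 1_K$ its unit. For a closed $F\subseteq K$, a regular extension operator for $F$ in $K$ is a bounded linear map $E:C(F)\to C(K)$ with $E(f)|_F=f$ for all $f$, $\|E\|\le1$ and $E(\mathbf 1_F)=\mathbf 1_K$. $K$ has the regular extension property if every nonempty closed subset admits a regular extension operator in $K$. *)

From HB Require Import structures.
From mathcomp Require Import all_boot all_order all_algebra.
From mathcomp Require Import all_classical all_reals all_analysis.
Set Implicit Arguments. Unset Strict Implicit. Unset Printing Implicit Defensive.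
Import Order.TTheory GRing.Theory Num.Theory.
Import numFieldNormedType.Exports.
Local Open Scope classical_set_scope.
Local Open Scope ring_scope.

Definition isolated_in {T : topologicalType} (A : set T) (x : T) : Prop :=
  A x /\ exists U : set T, nbhs x U /\ U `&` A `<=` [set x].

Definition derived {T : topologicalType} (A : set T) : set T :=
  [set x | A x /\ ~ isolated_in A x].

Definition scattered (T : topologicalType) : Prop :=
  forall A : set T, A !=set0 -> exists x, isolated_in A x.

Definition height2 (T : topologicalType) : Prop :=
  derived (derived [set: T]) = set0.

(* C(F) is represented by functions K -> R continuous on F (the values
   outside F being irrelevant); E must be well defined on C(F), i.e. only
   depend on the restriction to F. *)
Definition regular_extension_operator {R : realType} {T : topologicalType}
    (F : set T) (E : (T -> R) -> (T -> R)) : Prop :=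
      (forall f : T -> R, {within F, continuous f} -> continuous (E f)) /\
      (forall f g : T -> R, {within F, continuous f} -> {within F, continuous g} ->
         (forall x, F x -> f x = g x) -> E f = E g) /\
      (forall (a b : R) (f g : T -> R), {within F, continuous f} -> {within F, continuous g} ->
         E (fun x => a * f x + b * g x) = (fun x => a * E f x + b * E g x)) /\
      (forall f : T -> R, {within F, continuous f} -> (forall x, F x -> E f x = f x)) /\
      (* ||E|| <= 1 for the sup norms *)
      (forall f : T -> R, {within F, continuous f} -> forall M : R,
         (forall y, F y -> `|f y| <= M) -> forall x, `|E f x| <= M) /\
      E (fun _ => 1) = (fun _ => 1).

Definition regular_extension_property (R : realType) (T : topologicalType) : Prop :=
  forall F : set T, closed F -> F !=set0 ->
    exists E : (T -> R) -> (T -> R), regular_extension_operator F E.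

(** In a compact Hausdorff space of height 2 every point has a neighbourhood
   containing no other non-isolated point, so there are only finitely many
   non-isolated points; separate them by pairwise disjoint neighbourhoods
   [V p].  Given a nonempty closed [F] and [q0] in [F], fix [F] pointwise,
   send a point of [V p] outside [F] to [p] when [p] is a non-isolated point
   of [F], and every other point to [q0].  This retraction onto [F] is
   continuous: at a non-isolated point outside [F] it is locally constant,
   and near a non-isolated [p] in [F] it maps each point to itself or to [p].
   Composition with a continuous retraction is a regular extension
   operator. *)

From HB Require Import structures.
From mathcomp Require Import all_boot all_order all_algebra.
From mathcomp Require Import all_classical all_reals all_analysis.
From mathcomp Require Import finmap.
Import numFieldNormedType.Exports.
Local Open Scope classical_set_scope.

Lemma isolated_continuous_at {T U : topologicalType} (f : T -> U) (x : T) :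
  isolated_in [set: T] x -> {for x, continuous f}.
Proof.
move=> [_ [W [xW Wx]]]; rewrite /prop_for /continuous_at => B /= fxB.
apply: filterS xW => y Wy.
by rewrite (Wx y) //; exact: nbhs_singleton fxB.
Qed.

Lemma continuous_within_comp {T U S : topologicalType} (F : set U)
    (f : U -> S) (r : T -> U) :
  {within F, continuous f} -> continuous r -> (forall x, F (r x)) ->
  continuous (f \o r).
Proof.
move=> /subspace_continuousP cf cr rF x B nB.
have rB : \forall y \near x, F (r y) -> B (f (r y)) := cr x _ (cf _ (rF x) _ nB).
by apply: filterS rB => y /(_ (rF y)).
Qed.

Lemma regular_extension_retraction {R : realType} {T : topologicalType}
    (F : set T) (r : T -> T) :
  continuous r -> (forall x, F (r x)) -> (forall x, F x -> r x = x) ->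
  regular_extension_operator F (fun f : T -> R => f \o r).
Proof.
move=> cr rF rid; split; [|split; [|split; [|split; [|split]]]] => //.
- by move=> f cf; exact: continuous_within_comp cf cr rF.
- by move=> f g _ _ fg; apply: funext => x; exact: fg.
- by move=> f _ x Fx; rewrite /= rid.
- by move=> f _ M fM x; exact: fM.
Qed.

Lemma compact_cover_compact {T : topologicalType} (A : set T) :
  compact A -> cover_compact A.
Proof.
case: (pselect (exists t : T, True)) => [[t _]|T0] cA.
  pose Tp : ptopologicalType := HB.pack T (isPointed.Build T t).
  by move: (cA : @compact Tp A); rewrite compact_cover.
move=> I D f _ _; exists fset0 => // x _.
by exfalso; apply: T0; exists x.
Qed.

Lemma compact_locally_subsingleton_finite {K : topologicalType} (A : set K) :
  compact [set: K] ->
  (forall x, exists U, nbhs x U /\ U `&` A `<=` [set x]) ->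
  exists s : {fset K}, A `<=` [set` s].
Proof.
move=> cK locA; have [U UA] := choice locA.
have [s _ cov] := compact_cover_compact _ cK K setT (fun x => (U x)°)
  (fun x _ => @open_interior _ (U x)) (fun x _ => ex_intro2 _ _ x I (UA x).1).
exists s => p Ap; have [i si Uip] := cov p I.
by rewrite ((UA i).2 p) //; split => //; exact: interior_subset.
Qed.

Lemma height2_locally_subsingleton_derived {K : topologicalType} :
  height2 K -> forall x : K,
  exists U, nbhs x U /\ U `&` derived [set: K] `<=` [set x].
Proof.
move=> h2 x; case: (pselect (derived [set: K] x)) => Dx.
  have [] // : isolated_in (derived [set: K]) x.
  apply: contrapT => nix.
  by have := conj Dx nix : derived (derived [set: K]) x; rewrite h2.
have [_ [U [nU Ux]]] : isolated_in [set: K] x.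
  by apply: contrapT => nix; exact: Dx (conj I nix).
by exists U; split => // y [Uy _]; exact: Ux.
Qed.

Lemma hausdorff_fset_separation {K : topologicalType} (s : {fset K}) :
  hausdorff_space K -> exists V : K -> set K, (forall p, nbhs p (V p)) /\
    (forall p q, p \in s -> q \in s -> p != q -> V p `&` V q = set0).
Proof.
rewrite open_hausdorff => hK.
have sep (pq : K * K) : exists W : set K * set K, pq.1 != pq.2 ->
    [/\ nbhs pq.1 W.1, nbhs pq.2 W.2 & W.1 `&` W.2 = set0].
  case: (eqVneq pq.1 pq.2) => [_|pq12]; first by exists (setT, setT).
  have [[A B] /= [pA qB] [oA oB /eqP AB0]] := hK _ _ pq12.
  exists (A, B) => _; rewrite !in_setE in pA qB.
  by split => //; apply: open_nbhs_nbhs.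
have [W hW] := choice sep.
exists (fun p => \bigcap_(q in [set` (s `\ p)%fset]) ((W (p, q)).1 `&` (W (q, p)).2)).
split=> [p|p q ps qs pq].
  apply: filter_bigI => q; rewrite !inE => /andP[qp _].
  have pq : p != q by rewrite eq_sym.
  have [pW _ _] := hW (p, q) pq.
  have [_ pW' _] := hW (q, p) qp.
  exact: filterI.
apply/seteqP; split => // y [Vpy Vqy].
have [_ _ /= Wpq0] := hW (p, q) pq.
suff : ((W (p, q)).1 `&` (W (p, q)).2) y by rewrite Wpq0.
split.
- by have [] // := Vpy q; rewrite /= !inE qs eq_sym pq.
- by have [] // := Vqy p; rewrite /= !inE ps pq.
Qed.

Section Height2Retraction.
Variables (K : topologicalType) (F D : set K) (q0 : K) (V : K -> set K).
Hypotheses (closedF : closed F) (Fq0 : F q0)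
  (derivedD : derived [set: K] `<=` D) (nbhsV : forall p, nbhs p (V p))
  (disjointV : forall {p q}, D p -> D q -> p != q -> V p `&` V q = set0).

Definition retraction (y : K) : K :=
  if `[< F y >] then y else xget q0 [set p | [/\ D p, F p & V p y]].

Lemma retraction_in y : F (retraction y).
Proof.
rewrite /retraction; case: asboolP => // _.
by case: xgetP => // p _ [].
Qed.

Lemma retraction_id y : F y -> retraction y = y.
Proof. by rewrite /retraction; case: asboolP. Qed.

Lemma retraction_nbhs_derived {p y} : D p -> V p y -> ~ F y ->
  retraction y = if `[< F p >] then p else q0.
Proof.
move=> Dp Vpy Fy; rewrite /retraction; case: asboolP => // _.
have candidate_eq q : [/\ D q, F q & V q y] -> q = p.
  move=> [Dq _ Vqy]; apply: contrapT => /eqP qp.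
  by have := disjointV Dq Dp qp; rewrite -subset0 => /(_ y); apply.
case: asboolP => Fp; case: xgetP => [q _ Pq|nq] //.
- exact: candidate_eq.
- by case: (nq p).
- by case: Fp; rewrite -(candidate_eq _ Pq); case: Pq.
Qed.

Lemma continuous_retraction : continuous retraction.
Proof.
move=> x; case: (pselect (isolated_in [set: K] x)) => [isox|nix].
  exact: isolated_continuous_at isox.
have Dx : D x by apply: derivedD.
move=> B /= nB; case: (pselect (F x)) => Fx.
  rewrite retraction_id // in nB.
  apply: filterS (filterI nB (nbhsV x)) => y [By Vxy] /=.
  case: (pselect (F y)) => Fy; first by rewrite retraction_id.
  by rewrite (retraction_nbhs_derived Dx Vxy Fy) asboolT //; exact: nbhs_singleton.
have nFx : nbhs x (~` F) by apply: open_nbhs_nbhs; split => //; exact: closed_openC.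
apply: filterS (filterI nFx (nbhsV x)) => y [Fy Vxy] /=.
rewrite (retraction_nbhs_derived Dx Vxy Fy).
rewrite (retraction_nbhs_derived Dx (nbhs_singleton (nbhsV x)) Fx) in nB.
by rewrite asboolF // in nB *; exact: nbhs_singleton.
Qed.

End Height2Retraction.

Theorem corollary3p13 (R : realType) (K : topologicalType) :
  compact [set: K] -> hausdorff_space K -> scattered K -> height2 K ->
  regular_extension_property R K.
Proof.
move=> cK hK _ h2 F cF [q0 Fq0].
have [s derived_s] := compact_locally_subsingleton_finite _ cK
  (height2_locally_subsingleton_derived h2).
have [V [nbhsV disjointV]] := hausdorff_fset_separation s hK.
exists (fun f => f \o retraction _ F [set` s] q0 V).
apply: regular_extension_retraction.
- exact: continuous_retraction cF derived_s nbhsV disjointV.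
- exact: retraction_in Fq0.
- exact: retraction_id.
Qed.
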